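(* Let $d$ be an integer and $x$ a real number with $0<d\leqslant x/2$. For every integer $k$ with $K_d-d<k\leqslant K_d$, $$d^2\lfloor x/k\rfloor+\frac{2dx}{\lfloor x/k\rfloor}-x^2F(x/k)=2d\sqrt{dx}+kd-\frac{k^3}{3x}+O(d^{5/2}x^{-1/2}),$$ with an absolute implied constant.
   Context: $\lfloor\cdot\rfloor$ denotes the integer part. For an integer $d\geqslant 0$ and real $x>0$, $K_d=K_d(x)=\big\lfloor \big(d+\sqrt{d^2+4dx}\,\big)/2\big\rfloor$. For real $t$, $F(t)=\sum_{n>t-1}\frac{1}{n^2(n+1)^2}$, summed over positive integers $n>t-1$. *)

From Stdlib Require Import Reals Lra ZArith.
From Coquelicot Require Import Coquelicot.
Open Scope R_scope.

(* Integer part (floor) of a real: Int_part r = up r - 1 = floor r. *)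
Definition floorR (r : R) : Z := Int_part r.

Definition K (d : Z) (x : R) : Z :=
  floorR ((IZR d + sqrt (IZR d ^ 2 + 4 * IZR d * x)) / 2).

Definition F_term (t : R) (n : nat) : R :=
  if Rlt_dec (t - 1) (INR n) then
    (if Nat.eqb n 0 then 0 else 1 / (INR n ^ 2 * (INR n + 1) ^ 2))
  else 0.

Definition F (t : R) : R := Series (F_term t).

From Stdlib Require Import Reals Lra Lia Psatz ZArith.
From Coquelicot Require Import Coquelicot.
Open Scope R_scope.

(* Put w = sqrt (x / d) and k = d * kappa.  The window K_d - d < k <= K_d gives
   |kappa - w| <= 1, and the left-hand side is d^2 times
     q + 2 w^2 / q - w^4 F(t) - 2 w - kappa + kappa^3 / (3 w^2),
   with t = x / k = w^2 / kappa and q = floor t.  Telescoping against 1/(3 n^3) and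
   1/(3 n^3) - 1/n^5 gives F(t) = 1/(3 q^3) + O(q^-5), so it remains to compare
   phi(s) = s + 2 w^2 / s - w^4 / (3 s^3) at q and at t.  One has
   phi(t) = 2 w + kappa - kappa^3 / (3 w^2) + (kappa - w)^2 / kappa, and the difference
   quotient of phi between q and t is (1 - (kappa/w)^2)^2 + O(|w/q - kappa/w|) = O(1/w),
   the derivative (1 - w^2/s^2)^2 of phi vanishing at s = w.  Since t - q < 1, the whole
   error is O(d^2 / w) = O(d^(5/2) x^(-1/2)). *)

Lemma is_series_le (a b : nat -> R) (la lb : R) :
  is_series a la -> is_series b lb -> (forall n, a n <= b n) -> la <= lb.
Proof.
  intros Ha Hb Hab.
  assert (Hsum : forall N, sum_n a N <= sum_n b N).
  { induction N as [|N IH].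
    - rewrite !sum_O. apply Hab.
    - rewrite !sum_Sn. apply Rplus_le_compat; [exact IH | apply Hab]. }
  exact (is_lim_seq_le _ _ la lb Hsum Ha Hb).
Qed.

Lemma is_series_telescoping (b : nat -> R) :
  is_lim_seq b 0 -> is_series (fun n => b n - b (S n)) (b O).
Proof.
  intro Hb.
  assert (Hsum : forall N, sum_n (fun n => b n - b (S n)) N = b O - b (S N)).
  { induction N as [|N IH].
    - rewrite sum_O. reflexivity.
    - rewrite sum_Sn, IH. unfold plus; simpl. ring. }
  change (is_lim_seq (sum_n (fun n => b n - b (S n))) (b O)).
  apply (is_lim_seq_ext (fun N => b O - b (S N))); [intro N; symmetry; apply Hsum|].
  apply is_lim_seq_incr_1 in Hb.
  pose proof (is_lim_seq_minus' _ _ _ _ (is_lim_seq_const (b O)) Hb) as Hlim.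
  now rewrite Rminus_0_r in Hlim.
Qed.

Definition tail_difference (h : R -> R) (Q n : nat) : R :=
  if Nat.leb Q n then h (INR n) - h (INR n + 1) else 0.

Lemma is_series_tail_telescoping (h : R -> R) (Q : nat) :
  is_lim_seq (fun n => h (INR n)) 0 -> is_series (tail_difference h Q) (h (INR Q)).
Proof.
  intro Hh. unfold tail_difference.
  set (b := fun n => h (INR (Nat.max Q n))).
  assert (Hb : is_lim_seq b 0).
  { apply (is_lim_seq_ext_loc (fun n => h (INR n))); [|exact Hh].
    exists Q. intros n Hn. unfold b. now rewrite Nat.max_r. }
  apply (is_series_ext (fun n => b n - b (S n))).
  - intro n. unfold b. destruct (Nat.leb Q n) eqn:E.
    + apply Nat.leb_le in E. rewrite Nat.max_r, Nat.max_r, S_INR by lia. reflexivity.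
    + apply Nat.leb_gt in E. rewrite Nat.max_l, Nat.max_l by lia. lra.
  - replace (h (INR Q)) with (b O) by (unfold b; now rewrite Nat.max_l by lia).
    now apply is_series_telescoping.
Qed.

Lemma is_lim_seq_le_inv_INR (u : nat -> R) :
  (forall n, (1 <= n)%nat -> Rabs (u n) <= / INR n) -> is_lim_seq u 0.
Proof.
  intro Hu.
  apply is_lim_seq_le_le_loc with (u := fun n => - / INR n) (w := fun n => / INR n).
  - exists 1%nat. intros n Hn. now apply Rabs_le_between, Hu.
  - replace (Finite 0) with (Rbar_opp (Rbar_inv p_infty)) by (simpl; f_equal; ring).
    apply -> is_lim_seq_opp.
    apply is_lim_seq_inv; [apply is_lim_seq_INR | discriminate].
  - replace (Finite 0) with (Rbar_inv p_infty) by reflexivity.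
    apply is_lim_seq_inv; [apply is_lim_seq_INR | discriminate].
Qed.

Lemma inv_sq_mul_succ_sq_le (n : R) : 1 <= n ->
  1 / (n ^ 2 * (n + 1) ^ 2) <= 1 / (3 * n ^ 3) - 1 / (3 * (n + 1) ^ 3).
Proof.
  intro Hn.
  assert (Hgap : 1 / (3 * n ^ 3) - 1 / (3 * (n + 1) ^ 3) - 1 / (n ^ 2 * (n + 1) ^ 2)
                 = 1 / (3 * n ^ 3 * (n + 1) ^ 3)) by (field; lra).
  assert (0 < 1 / (3 * n ^ 3 * (n + 1) ^ 3)).
  { apply Rdiv_lt_0_compat; [lra|].
    apply Rmult_lt_0_compat; [apply Rmult_lt_0_compat; [lra|] |]; apply pow_lt; lra. }
  lra.
Qed.

Lemma inv_sq_mul_succ_sq_ge (n : R) : 1 <= n ->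
  1 / (3 * n ^ 3) - 1 / n ^ 5 - (1 / (3 * (n + 1) ^ 3) - 1 / (n + 1) ^ 5)
    <= 1 / (n ^ 2 * (n + 1) ^ 2).
Proof.
  intro Hn.
  assert (Hgap : 1 / (n ^ 2 * (n + 1) ^ 2)
                 - (1 / (3 * n ^ 3) - 1 / n ^ 5 - (1 / (3 * (n + 1) ^ 3) - 1 / (n + 1) ^ 5))
                 = (3 * ((n + 1) ^ 5 - n ^ 5) - n ^ 2 * (n + 1) ^ 2)
                   / (3 * n ^ 5 * (n + 1) ^ 5)) by (field; lra).
  assert (0 <= (3 * ((n + 1) ^ 5 - n ^ 5) - n ^ 2 * (n + 1) ^ 2)
               / (3 * n ^ 5 * (n + 1) ^ 5)).
  { apply Rdiv_le_0_compat; [nra|].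
    apply Rmult_lt_0_compat; [apply Rmult_lt_0_compat; [lra|] |]; apply pow_lt; lra. }
  lra.
Qed.

Lemma is_lim_seq_inv_cube : is_lim_seq (fun n => 1 / (3 * INR n ^ 3)) 0.
Proof.
  apply is_lim_seq_le_inv_INR. intros n Hn.
  apply le_INR in Hn. simpl in Hn.
  assert (INR n <= 3 * INR n ^ 3) by nra.
  rewrite Rabs_pos_eq.
  - unfold Rdiv. rewrite Rmult_1_l. apply Rinv_le_contravar; lra.
  - apply Rdiv_le_0_compat; [lra|]. apply Rmult_lt_0_compat; [lra | apply pow_lt; lra].
Qed.

Lemma is_lim_seq_inv_fifth : is_lim_seq (fun n => 1 / INR n ^ 5) 0.
Proof.
  apply is_lim_seq_le_inv_INR. intros n Hn.
  apply le_INR in Hn. simpl in Hn.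
  assert (INR n <= INR n ^ 5).
  { replace (INR n ^ 5) with (INR n * (INR n ^ 2) ^ 2) by ring.
    assert (1 <= (INR n ^ 2) ^ 2) by (apply pow_R1_Rle; nra). nra. }
  rewrite Rabs_pos_eq.
  - unfold Rdiv. rewrite Rmult_1_l. apply Rinv_le_contravar; lra.
  - apply Rdiv_le_0_compat; [lra | apply pow_lt; lra].
Qed.

Lemma floorR_bounds (t : R) : IZR (floorR t) <= t < IZR (floorR t) + 1.
Proof. pose proof (base_Int_part t). unfold floorR. lra. Qed.

Lemma floorR_ge_1 (t : R) : 1 <= t -> 1 <= IZR (floorR t).
Proof.
  intro Ht. pose proof (floorR_bounds t) as [_ Hlt].
  apply IZR_le. assert (0 < floorR t)%Z by (apply lt_IZR; lra). lia.
Qed.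

Lemma F_term_of_floor (t : R) (n : nat) : 1 <= t ->
  F_term t n = if Nat.leb (Z.to_nat (floorR t)) n then 1 / (INR n ^ 2 * (INR n + 1) ^ 2) else 0.
Proof.
  intro Ht. pose proof (floorR_bounds t) as Hfl. pose proof (floorR_ge_1 t Ht) as Hq.
  assert (HQ : INR (Z.to_nat (floorR t)) = IZR (floorR t)).
  { rewrite INR_IZR_INZ, Z2Nat.id; [reflexivity|]. apply le_IZR. simpl. lra. }
  unfold F_term. destruct (Nat.leb (Z.to_nat (floorR t)) n) eqn:E.
  - apply Nat.leb_le, le_INR in E.
    destruct (Rlt_dec (t - 1) (INR n)) as [_|Hn]; [|exfalso; lra].
    destruct (Nat.eqb n 0) eqn:E0; [|reflexivity].
    apply Nat.eqb_eq in E0. subst n. simpl in E. lra.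
  - apply Nat.leb_gt in E.
    assert (INR n + 1 <= INR (Z.to_nat (floorR t))) by (rewrite <- S_INR; apply le_INR; lia).
    destruct (Rlt_dec (t - 1) (INR n)); [exfalso; lra | reflexivity].
Qed.

Lemma F_bounds (t : R) : 1 <= t ->
  let q := IZR (floorR t) in
  1 / (3 * q ^ 3) - 1 / q ^ 5 <= F t <= 1 / (3 * q ^ 3).
Proof.
  intros Ht q.
  set (Q := Z.to_nat (floorR t)).
  assert (HQ : INR Q = q).
  { unfold Q, q. rewrite INR_IZR_INZ, Z2Nat.id; [reflexivity|].
    apply le_IZR. pose proof (floorR_ge_1 t Ht). simpl. lra. }
  set (upper := fun m : R => 1 / (3 * m ^ 3)).
  set (lower := fun m : R => 1 / (3 * m ^ 3) - 1 / m ^ 5).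
  pose proof (is_series_tail_telescoping upper Q is_lim_seq_inv_cube) as Hup.
  assert (Hlow : is_series (tail_difference lower Q) (lower (INR Q))).
  { apply is_series_tail_telescoping.
    pose proof (is_lim_seq_minus' _ _ _ _ is_lim_seq_inv_cube is_lim_seq_inv_fifth) as H.
    now rewrite Rminus_0_r in H. }
  assert (Hterm : forall n, 0 <= F_term t n /\
    tail_difference lower Q n <= F_term t n <= tail_difference upper Q n).
  { intro n. unfold tail_difference. rewrite F_term_of_floor by exact Ht. fold Q.
    destruct (Nat.leb Q n) eqn:E; [|lra].
    apply Nat.leb_le, le_INR in E. rewrite HQ in E.
    pose proof (floorR_ge_1 t Ht) as Hq1. fold q in Hq1.
    repeat split.
    - apply Rdiv_le_0_compat; [lra|]. apply Rmult_lt_0_compat; apply pow_lt; lra.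
    - apply inv_sq_mul_succ_sq_ge; lra.
    - apply inv_sq_mul_succ_sq_le; lra. }
  assert (Hex : ex_series (F_term t)).
  { apply (@ex_series_le R_AbsRing R_CompleteNormedModule _ (tail_difference upper Q)).
    - intro n. change (norm (F_term t n)) with (Rabs (F_term t n)).
      rewrite Rabs_pos_eq; apply Hterm.
    - eexists. exact Hup. }
  rewrite HQ in Hup, Hlow.
  split.
  - exact (is_series_le _ _ _ _ Hlow (Series_correct _ Hex) (fun n => proj1 (proj2 (Hterm n)))).
  - exact (is_series_le _ _ _ _ (Series_correct _ Hex) Hup (fun n => proj2 (proj2 (Hterm n)))).
Qed.

Definition main_term (w q : R) : R := q + 2 * w ^ 2 / q - w ^ 4 / (3 * q ^ 3).

Definition main_term_slope (a b : R) : R := 1 - 2 * a * b + (a ^ 3 * b + a ^ 2 * b ^ 2 + a * b ^ 3) / 3.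

Lemma main_term_sub (w q t : R) : 0 < q -> 0 < t ->
  main_term w t - main_term w q = (t - q) * main_term_slope (w / t) (w / q).
Proof. intros Hq Ht. unfold main_term, main_term_slope. field. lra. Qed.

Lemma main_term_at_ratio (w k : R) : 0 < w -> 0 < k ->
  main_term w (w ^ 2 / k) = 2 * w + k - k ^ 3 / (3 * w ^ 2) + (k - w) ^ 2 / k.
Proof. intros Hw Hk. unfold main_term. field. lra. Qed.

Lemma main_term_slope_bound (a b u : R) : 0 < u <= 1 -> Rabs (1 - a) <= u -> 0 < a <= 2 ->
  b <= 4 -> 0 <= b - a <= 8 * u -> Rabs (main_term_slope a b) <= 329 * u.
Proof.
  intros Hu Ha1 Ha Hb Hba.
  apply Rabs_le_between in Ha1.
  (* On the diagonal b = a the slope is the derivative (1 - a^2)^2 of main_term at w / a. *)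
  set (P := -2 * a + (a * b ^ 2 + 2 * a ^ 2 * b + 3 * a ^ 3) / 3).
  assert (Hslope : main_term_slope a b = (1 - a) ^ 2 * (1 + a) ^ 2 + (b - a) * P)
    by (unfold main_term_slope, P; field).
  assert (HP : Rabs P <= 40).
  { assert (0 <= b ^ 2 <= 16) by nra. assert (0 <= a ^ 2 <= 4) by nra.
    assert (0 <= a * b ^ 2 <= 32) by nra. assert (0 <= a ^ 2 * b <= 16) by nra.
    assert (0 <= a ^ 3 <= 8) by nra.
    unfold P. apply Rabs_le. lra. }
  assert (Hfirst : 0 <= (1 - a) ^ 2 * (1 + a) ^ 2 <= 9 * u).
  { assert ((1 - a) ^ 2 <= u ^ 2) by nra. assert (0 <= (1 + a) ^ 2 <= 9) by nra.
    split; [apply Rmult_le_pos; apply pow2_ge_0|].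
    assert ((1 - a) ^ 2 * (1 + a) ^ 2 <= u ^ 2 * 9)
      by (apply Rmult_le_compat; try apply pow2_ge_0; lra).
    nra. }
  assert (Hsecond : Rabs ((b - a) * P) <= 320 * u).
  { rewrite Rabs_mult, (Rabs_pos_eq (b - a)) by lra.
    assert ((b - a) * Rabs P <= (8 * u) * 40)
      by (apply Rmult_le_compat; try lra; apply Rabs_pos).
    lra. }
  rewrite Hslope. apply Rabs_le_between in Hsecond. apply Rabs_le. lra.
Qed.

Lemma quarter_le_floor_ratio (w k q : R) : 2 <= w ^ 2 -> 0 < w -> k <= w + 1 -> 1 < k ->
  w ^ 2 / k - 1 < q -> 1 <= q -> w / 4 <= q.
Proof.
  intros Hw2 Hw Hk Hk1 Hq Hq1.
  assert (Hw1 : 1 <= w) by nra.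
  assert (w / 2 <= w ^ 2 / k) by (apply (Rle_div_r (w / 2) (w ^ 2) k); nra).
  lra.
Qed.

Lemma main_term_floor_error (w k q : R) : 2 <= w ^ 2 -> 0 < w ->
  w - 1 < k <= w + 1 -> 1 < k -> w ^ 2 / k - 1 < q <= w ^ 2 / k -> 1 <= q ->
  Rabs (main_term w (w ^ 2 / k) - main_term w q) <= 329 / w.
Proof.
  intros Hw2 Hw Hk Hk1 Hq Hq1.
  set (t := w ^ 2 / k) in *.
  assert (Hw1 : 1 <= w) by nra.
  assert (Htk : t * k = w ^ 2) by (unfold t; field; lra).
  assert (Ht : w / 2 <= t) by nra.
  assert (Hqw := quarter_le_floor_ratio w k q Hw2 Hw (proj2 Hk) Hk1 (proj1 Hq) Hq1).
  set (u := / w).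
  assert (Huw : u * w = 1) by (unfold u; field; lra).
  assert (Hu : 0 < u <= 1).
  { split; [apply Rinv_0_lt_compat; lra|]. nra. }
  assert (Hwt : w / t = k / w) by (unfold t; field; lra).
  set (a := k / w) in *. set (b := w / q).
  assert (Ha : a * w = k) by (unfold a; field; lra).
  assert (Hb : b * q = w) by (unfold b; field; lra).
  assert (Hba : 0 <= b - a <= 8 * u).
  { assert (Hdiff : b - a = w * (t - q) / (t * q)) by (rewrite <- Hwt; unfold b; field; nra).
    rewrite Hdiff. split; [apply Rdiv_le_0_compat; nra|].
    apply Rle_div_l; [nra|].
    assert (w ^ 2 / 8 <= t * q) by nra.
    assert (u * w ^ 2 = w) by (replace (u * w ^ 2) with (u * w * w) by ring; rewrite Huw; ring).
    nra. }
  assert (Hslope : Rabs (main_term_slope a b) <= 329 * u).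
  { apply main_term_slope_bound; try lra.
    - apply Rabs_le. nra.
    - nra.
    - nra. }
  rewrite main_term_sub, Hwt, Rabs_mult, Rabs_pos_eq by nra.
  fold b. unfold Rdiv. rewrite Rmult_comm with (r1 := 329). fold u.
  assert (0 <= Rabs (main_term_slope a b)) by apply Rabs_pos.
  nra.
Qed.

Lemma normalized_estimate (w k q G : R) : 2 <= w ^ 2 -> 0 < w ->
  w - 1 < k <= w + 1 -> 1 < k -> w ^ 2 / k - 1 < q <= w ^ 2 / k -> 1 <= q ->
  1 / (3 * q ^ 3) - 1 / q ^ 5 <= G <= 1 / (3 * q ^ 3) ->
  Rabs (q + 2 * w ^ 2 / q - w ^ 4 * G - 2 * w - k + k ^ 3 / (3 * w ^ 2)) <= 1400 / w.
Proof.
  intros Hw2 Hw Hk Hk1 Hq Hq1 HG.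
  assert (Hw1 : 1 <= w) by nra.
  assert (Hsplit : q + 2 * w ^ 2 / q - w ^ 4 * G - 2 * w - k + k ^ 3 / (3 * w ^ 2)
    = - (main_term w (w ^ 2 / k) - main_term w q) + (k - w) ^ 2 / k
      + w ^ 4 * (1 / (3 * q ^ 3) - G)).
  { rewrite main_term_at_ratio by lra. unfold main_term. field. lra. }
  assert (Hmain := main_term_floor_error w k q Hw2 Hw Hk Hk1 Hq Hq1).
  assert (Hcenter : 0 <= (k - w) ^ 2 / k <= 2 / w).
  { split; [apply Rdiv_le_0_compat; [apply pow2_ge_0 | lra]|].
    apply Rle_div_l; [lra|].
    assert ((k - w) ^ 2 <= 1) by nra.
    assert (w * / w = 1) by (field; lra).
    assert (0 < / w) by (apply Rinv_0_lt_compat; lra).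
    unfold Rdiv. nra. }
  assert (Htail : 0 <= w ^ 4 * (1 / (3 * q ^ 3) - G) <= 1024 / w).
  { assert (Hqw := quarter_le_floor_ratio w k q Hw2 Hw (proj2 Hk) Hk1 (proj1 Hq) Hq1).
    assert (Hb : 0 < w / q <= 4).
    { split; [apply Rdiv_lt_0_compat; lra|]. apply (Rle_div_l w 4 q); lra. }
    assert (Hpow : w ^ 4 * (1 / q ^ 5) = (w / q) ^ 5 / w) by (field; lra).
    assert ((w / q) ^ 5 <= 1024) by (replace 1024 with (4 ^ 5) by ring; apply pow_incr; lra).
    assert (0 <= w ^ 4) by (apply pow_le; lra).
    split; [apply Rmult_le_pos; lra|].
    assert (w ^ 4 * (1 / (3 * q ^ 3) - G) <= w ^ 4 * (1 / q ^ 5))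
      by (apply Rmult_le_compat_l; lra).
    assert ((w / q) ^ 5 / w <= 1024 / w)
      by (apply Rmult_le_compat_r; [left; apply Rinv_0_lt_compat|]; lra).
    lra. }
  rewrite Hsplit. apply Rabs_le_between in Hmain.
  assert (1355 / w <= 1400 / w) by (apply Rmult_le_compat_r; [left; apply Rinv_0_lt_compat|]; lra).
  apply Rabs_le. unfold Rdiv in *. lra.
Qed.

Lemma root_bounds (D x : R) : 0 < D -> 2 * D <= x ->
  let r := (D + sqrt (D ^ 2 + 4 * D * x)) / 2 in
  sqrt (D * x) <= r <= sqrt (D * x) + D /\ 2 * D <= r <= x.
Proof.
  intros HD Hx r.
  assert (Hsr : sqrt (D ^ 2 + 4 * D * x) * sqrt (D ^ 2 + 4 * D * x) = D ^ 2 + 4 * D * x)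
    by (apply sqrt_sqrt; nra).
  assert (Hs : sqrt (D * x) * sqrt (D * x) = D * x) by (apply sqrt_sqrt; nra).
  pose proof (sqrt_pos (D ^ 2 + 4 * D * x)). pose proof (sqrt_pos (D * x)).
  unfold r. repeat split; nra.
Qed.

Lemma K_window (d : Z) (x : R) (k : Z) : 0 < IZR d -> IZR d <= x / 2 ->
  (K d x - d < k)%Z -> (k <= K d x)%Z ->
  sqrt (IZR d * x) - IZR d < IZR k <= sqrt (IZR d * x) + IZR d /\ IZR d < IZR k <= x.
Proof.
  intros Hd Hdx HkK HKk.
  pose proof (root_bounds (IZR d) x Hd ltac:(lra)) as Hr. cbv zeta in Hr.
  pose proof (floorR_bounds ((IZR d + sqrt (IZR d ^ 2 + 4 * IZR d * x)) / 2)) as HK.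
  fold (K d x) in HK.
  apply IZR_le in HKk.
  assert (IZR (K d x) - IZR d + 1 <= IZR k)
    by (rewrite <- minus_IZR, <- plus_IZR; apply IZR_le; lia).
  lra.
Qed.

Lemma Rpower_five_halves_mul_inv_sqrt (D x : R) : 0 < D -> 0 < x ->
  Rpower D (5 / 2) * Rpower x (- (1 / 2)) = D ^ 2 / sqrt (x / D).
Proof.
  intros HD Hx.
  replace (5 / 2) with (INR 2 + / 2) by (simpl; lra).
  replace (- (1 / 2)) with (- / 2) by field.
  rewrite Rpower_plus, Rpower_pow, Rpower_sqrt, Rpower_Ropp, Rpower_sqrt by lra.
  rewrite sqrt_div_alt by exact HD.
  assert (0 < sqrt D) by (apply sqrt_lt_R0; lra).
  assert (0 < sqrt x) by (apply sqrt_lt_R0; lra).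
  field. lra.
Qed.

Lemma mul_sqr_sqrt_div (D x : R) : 0 < D -> 0 <= x -> D * sqrt (x / D) ^ 2 = x.
Proof.
  intros HD Hx.
  rewrite <- Rsqr_pow2, Rsqr_sqrt by (apply Rdiv_le_0_compat; lra).
  field. lra.
Qed.

Lemma sqrt_mul_eq_mul_sqrt_div (D x : R) : 0 < D -> 0 <= x ->
  sqrt (D * x) = D * sqrt (x / D).
Proof.
  intros HD Hx.
  rewrite <- (mul_sqr_sqrt_div D x HD Hx) at 1.
  rewrite <- sqrt_pow2 by (pose proof (sqrt_pos (x / D)); nra).
  f_equal. ring.
Qed.

Lemma error_scaling (D w k q G : R) : 0 < D -> 0 < w -> q <> 0 ->
  D ^ 2 * q + 2 * D * (D * w ^ 2) / q - (D * w ^ 2) ^ 2 * G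
    - (2 * D * (D * w) + D * k * D - (D * k) ^ 3 / (3 * (D * w ^ 2)))
  = D ^ 2 * (q + 2 * w ^ 2 / q - w ^ 4 * G - 2 * w - k + k ^ 3 / (3 * w ^ 2)).
Proof. intros HD Hw Hq. field. lra. Qed.

Theorem proposition6 :
  exists C : R, 0 < C /\
  forall (d : Z) (x : R) (k : Z),
    0 < IZR d -> IZR d <= x / 2 ->
    (K d x - d < k)%Z -> (k <= K d x)%Z ->
    let q := IZR (floorR (x / IZR k)) in
    Rabs ((IZR d ^ 2 * q + 2 * IZR d * x / q - x ^ 2 * F (x / IZR k))
          - (2 * IZR d * sqrt (IZR d * x) + IZR k * IZR d
             - IZR k ^ 3 / (3 * x)))
      <= C * (Rpower (IZR d) (5 / 2) * Rpower x (- (1 / 2))).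
Proof.
  exists 1400. split; [lra|].
  intros d x k Hd Hdx HkK HKk; cbv zeta.
  destruct (K_window d x k Hd Hdx HkK HKk) as [Hk Hkx].
  set (D := IZR d) in *.
  assert (HD1 : 1 <= D) by (unfold D; apply IZR_le; apply lt_IZR in Hd; lia).
  set (w := sqrt (x / D)).
  assert (Hw : 0 < w) by (apply sqrt_lt_R0, Rdiv_lt_0_compat; lra).
  assert (Hxw : x = D * w ^ 2) by (symmetry; apply mul_sqr_sqrt_div; lra).
  assert (Hsw : sqrt (D * x) = D * w) by (apply sqrt_mul_eq_mul_sqrt_div; lra).
  rewrite Hsw in Hk.
  set (kappa := IZR k / D).
  assert (Hkappa : IZR k = D * kappa) by (unfold kappa; field; lra).
  set (t := x / IZR k).
  set (q := IZR (floorR t)).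
  assert (Ht : t = w ^ 2 / kappa) by (unfold t; rewrite Hxw, Hkappa; field; nra).
  assert (Ht1 : 1 <= t) by (apply (Rle_div_r 1 x (IZR k)); lra).
  pose proof (floorR_bounds t) as Hq. pose proof (floorR_ge_1 t Ht1) as Hq1.
  fold q in Hq, Hq1. rewrite Ht in Hq.
  assert (Hw2 : 2 <= w ^ 2) by nra.
  assert (Hkw : w - 1 < kappa <= w + 1) by (split; nra).
  assert (Hkappa1 : 1 < kappa) by nra.
  assert (Hqt : w ^ 2 / kappa - 1 < q <= w ^ 2 / kappa) by lra.
  assert (Hest := normalized_estimate w kappa q (F t) Hw2 Hw Hkw Hkappa1 Hqt Hq1 (F_bounds t Ht1)).
  rewrite Hsw, Hkappa, Hxw, error_scaling, Rabs_mult, Rabs_pos_eq by nra. rewrite <- Hxw.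
  rewrite Rpower_five_halves_mul_inv_sqrt by lra. fold w.
  replace (1400 * (D ^ 2 / w)) with (D ^ 2 * (1400 / w)) by (field; lra).
  apply Rmult_le_compat_l; [nra | exact Hest].
Qed.
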